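(* Let $f:H\to\mathbb{R}\cup\{+\infty\}$ be proper and lower semicontinuous, and let $(x^k)$ satisfy $\mathbf{H}_1$, $\mathbf{H}_2'$ and $\mathbf{H}_3$, with $m:=\inf_k a_kb_{k+1}>0$. Suppose $(x^k)$ $f$-converges to a point $x^*$ at which $f$ has the K\L{} property with desingularizing function $\varphi:[0,\eta[\to[0,+\infty[$. Let $\Phi:]0,\eta[\to\mathbb{R}$ be any primitive of $-(\varphi')^2$. (i) If $\lim_{t\to0^+}\Phi(t)\in\mathbb{R}$, then there is $K$ with $f(x^K)=f(x^* )$ and $x^k=x^*$ for all $k\ge K$. (ii) If $\lim_{t\to0^+}\Phi(t)=+\infty$, then there exists $k_0\in\mathbb{N}$ such that $f(x^k)-f(x^* )=O\Big(\Phi^{-1}\big(m\sum_{n=k_0}^{k-1}b_{n+1}\big)\Big)$ and $\|x^*-x^k\|=O\Big(\varphi\circ\Phi^{-1}\big(m\sum_{n=k_0}^{k-1}b_{n+1}\big)\Big)$.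
   Context: Subdifferential $\partial f$ (limiting Fréchet subdifferential), lazy slope $\|\partial f(x)\|_-=\inf_{p\in\partial f(x)}\|p\|$ ($+\infty$ if $\partial f(x)=\emptyset$), $f$-convergence: $x^k\to x$ strongly and $f(x^k)\to f(x)$. A desingularizing function is a continuous concave $\varphi:[0,\eta[\to[0,+\infty[$ with $\varphi(0)=0$, $C^1$ on $]0,\eta[$ with $\varphi'>0$; $f$ has the K\L{} property at $x^*$ with it if there is $\delta>0$ with $\varphi'(f(x)-f(x^* ))\|\partial f(x)\|_-\ge1$ for all $x$ with $\|x-x^*\|<\delta$ and $f(x^* )<f(x)<f(x^* )+\eta$. $\mathbf{H}_1$: $f(x^{k+1})+a_k\|x^{k+1}-x^k\|^2\le f(x^k)$, $a_k>0$. $\mathbf{H}_2'$: for each $k$, $b_{k+1}\|\partial f(x^k)\|_-\le\|x^{k+1}-x^k\|$ with $b_{k+1}>0$. $\mathbf{H}_3$: (i) $a_k\ge\underline a>0$; (ii) $(b_k)\notin\ell^1$; (iii) $\sup_{k\ge1}\frac1{a_kb_k}<\infty$. *)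

From Stdlib Require Import Reals.
Open Scope R_scope.

Record Hilbert := {
  hcar :> Type;
  hzero : hcar;
  hadd : hcar -> hcar -> hcar;
  hopp : hcar -> hcar;
  hscal : R -> hcar -> hcar;
  hinner : hcar -> hcar -> R;
  hadd_assoc : forall x y z, hadd x (hadd y z) = hadd (hadd x y) z;
  hadd_comm : forall x y, hadd x y = hadd y x;
  hadd_zero : forall x, hadd x hzero = x;
  hadd_opp : forall x, hadd x (hopp x) = hzero;
  hscal_one : forall x, hscal 1 x = x;
  hscal_assoc : forall a b x, hscal a (hscal b x) = hscal (a * b) x;
  hscal_distr_l : forall a x y, hscal a (hadd x y) = hadd (hscal a x) (hscal a y);
  hscal_distr_r : forall a b x, hscal (a + b) x = hadd (hscal a x) (hscal b x);
  hinner_sym : forall x y, hinner x y = hinner y x;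
  hinner_add : forall x y z, hinner (hadd x y) z = hinner x z + hinner y z;
  hinner_scal : forall a x y, hinner (hscal a x) y = a * hinner x y;
  hinner_pos : forall x, 0 <= hinner x x;
  hinner_def : forall x, hinner x x = 0 -> x = hzero;
  hcomplete : forall u : nat -> hcar,
    (forall eps, 0 < eps -> exists N, forall n p, (N <= n)%nat -> (N <= p)%nat ->
        sqrt (hinner (hadd (u n) (hopp (u p))) (hadd (u n) (hopp (u p)))) < eps) ->
    exists l, forall eps, 0 < eps -> exists N, forall n, (N <= n)%nat ->
        sqrt (hinner (hadd (u n) (hopp l)) (hadd (u n) (hopp l))) < eps
}.

Arguments hzero {h}.
Arguments hadd {h}.
Arguments hopp {h}.
Arguments hinner {h}.

Definition hsub {H : Hilbert} (x y : H) : H := hadd x (hopp y).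
Definition hnorm {H : Hilbert} (x : H) : R := sqrt (hinner x x).

Definition hconv {H : Hilbert} (u : nat -> H) (l : H) : Prop :=
  forall eps, 0 < eps -> exists N, forall n, (N <= n)%nat -> hnorm (hsub (u n) l) < eps.

(** * Extended-real-valued functions  H -> R ∪ {+oo}; [None] stands for +oo. *)
Definition efun (H : Hilbert) := H -> option R.

Definition proper {H : Hilbert} (f : efun H) : Prop := exists x v, f x = Some v.

Definition rlt_e (r : R) (v : option R) : Prop :=
  match v with None => True | Some a => r < a end.

Definition lsc {H : Hilbert} (f : efun H) : Prop :=
  forall x r, rlt_e r (f x) ->
    exists delta, 0 < delta /\ forall y, hnorm (hsub y x) < delta -> rlt_e r (f y).

Definition ele (v w : option R) : Prop :=
  match v, w with
  | _, None => True
  | None, Some _ => False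
  | Some a, Some b => a <= b
  end.

Definition fconv {H : Hilbert} (f : efun H) (u : nat -> H) (x : H) : Prop :=
  hconv u x /\
  exists fx, f x = Some fx /\
  forall eps, 0 < eps -> exists N, forall n, (N <= n)%nat ->
     exists v, f (u n) = Some v /\ Rabs (v - fx) < eps.

Definition frechet_subdiff {H : Hilbert} (f : efun H) (x p : H) : Prop :=
  exists fx, f x = Some fx /\
  forall eps, 0 < eps -> exists delta, 0 < delta /\
    forall y, hnorm (hsub y x) < delta ->
      match f y with
      | None => True
      | Some fy => fy - fx - hinner p (hsub y x) >= - eps * hnorm (hsub y x)
      end.

Definition subdiff {H : Hilbert} (f : efun H) (x p : H) : Prop :=
  exists (u q : nat -> H),
    fconv f u x /\ (forall n, frechet_subdiff f (u n) (q n)) /\ hconv q p.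

(** Lazy slope ||∂f(x)||_- = inf_{p in ∂f(x)} ||p||  (+oo if ∂f(x) is empty).
    We only need comparisons with real numbers; these are the literal
    unfoldings of  inf ≤ c  and  c ≤ inf  with the convention inf ∅ = +oo. *)
Definition lazy_slope_le {H : Hilbert} (f : efun H) (x : H) (c : R) : Prop :=
  forall eps, 0 < eps -> exists p, subdiff f x p /\ hnorm p <= c + eps.

Definition lazy_slope_ge {H : Hilbert} (f : efun H) (x : H) (c : R) : Prop :=
  forall p, subdiff f x p -> c <= hnorm p.

(** Upper bound eta in ]0,+oo] ([None] = +oo) *)
Definition below (eta : option R) (t : R) : Prop :=
  match eta with None => True | Some e => t < e end.

Definition eta_pos (eta : option R) : Prop :=
  match eta with None => True | Some e => 0 < e end.

Definition desingularizing (eta : option R) (phi dphi : R -> R) : Prop :=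
  eta_pos eta /\
  (forall t, 0 <= t -> below eta t -> 0 <= phi t) /\
  phi 0 = 0 /\
  (forall t, 0 <= t -> below eta t -> forall eps, 0 < eps ->
     exists delta, 0 < delta /\ forall s, 0 <= s -> below eta s ->
        Rabs (s - t) < delta -> Rabs (phi s - phi t) < eps) /\
  (forall s t l, 0 <= s -> below eta s -> 0 <= t -> below eta t -> 0 <= l <= 1 ->
     l * phi s + (1 - l) * phi t <= phi (l * s + (1 - l) * t)) /\
  (forall t, 0 < t -> below eta t -> derivable_pt_lim phi t (dphi t)) /\
  (forall t, 0 < t -> below eta t -> continuity_pt dphi t) /\
  (forall t, 0 < t -> below eta t -> 0 < dphi t).

Definition KL_at {H : Hilbert} (f : efun H) (xs : H) (eta : option R) (phi dphi : R -> R) : Prop :=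
  desingularizing eta phi dphi /\
  exists fs, f xs = Some fs /\
  exists delta, 0 < delta /\
    forall x fx, hnorm (hsub x xs) < delta -> f x = Some fx ->
      fs < fx -> below eta (fx - fs) ->
      lazy_slope_ge f x (/ dphi (fx - fs)).

Fixpoint psum (u : nat -> R) (k0 n : nat) : R :=
  match n with
  | O => 0
  | S n' => psum u k0 n' + u (k0 + n')%nat
  end.

From Stdlib Require Import Reals Ranalysis5 Lra Lia Classical.
Open Scope R_scope.

(* Write r_k = f(x_k) - f(xs) and d_k = ||x_{k+1} - x_k||.  Once x_k is close to xs,
   H1, H2' and the KL inequality give b_{k+1} <= phi'(r_k) d_k, and then
     m d_k       <= phi(r_k) - phi(r_{k+1})    (concavity of phi),
     m b_{k+1}   <= Phi(r_{k+1}) - Phi(r_k)    (mean value theorem, phi' nonincreasing).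
   The first inequality telescopes to ||xs - x_k|| <= phi(r_k) / m.  Summing the second,
   Phi(r_k) grows at least like m sum b_{n+1}, which diverges by H3(ii).  If Phi is bounded
   near 0 this forces r_K = 0 for some K, after which the sequence is stationary; if Phi blows
   up at 0, r_k stays below the point where Phi equals that sum. *)

(** * Hilbert space geometry *)

Section HilbertGeometry.
Variable H : Hilbert.
Implicit Types u v w y z : H.

Lemma inner_zero_l z : hinner (@hzero H) z = 0.
Proof.
  assert (E : hinner (hadd (@hzero H) hzero) z = hinner hzero z) by now rewrite hadd_zero.
  rewrite hinner_add in E; lra.
Qed.

Lemma inner_opp_l w z : hinner (hopp w) z = - hinner w z.
Proof.
  assert (E : hinner (hadd w (hopp w)) z = hinner hzero z) by now rewrite hadd_opp.
  rewrite hinner_add, inner_zero_l in E; lra.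
Qed.

Lemma inner_sub_l u v z : hinner (hsub u v) z = hinner u z - hinner v z.
Proof. unfold hsub; rewrite hinner_add, inner_opp_l; ring. Qed.

Lemma inner_sub_r u v z : hinner z (hsub u v) = hinner z u - hinner z v.
Proof. rewrite hinner_sym, inner_sub_l, (hinner_sym H u), (hinner_sym H v); ring. Qed.

Lemma inner_add_r u v z : hinner z (hadd u v) = hinner z u + hinner z v.
Proof. rewrite hinner_sym, hinner_add, (hinner_sym H u), (hinner_sym H v); ring. Qed.

Lemma inner_scal_r l u z : hinner z (hscal H l u) = l * hinner z u.
Proof. rewrite hinner_sym, hinner_scal, (hinner_sym H u); ring. Qed.

Lemma inner_sq_le u v : hinner u v ^ 2 <= hinner u u * hinner v v.
Proof.
  assert (Quad : forall l, 0 <= hinner u u + 2 * l * hinner u v + l ^ 2 * hinner v v).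
  { intro l; pose proof (hinner_pos _ (hadd u (hscal H l v))) as P.
    rewrite !hinner_add, !inner_add_r, !hinner_scal, !inner_scal_r, (hinner_sym H v u) in P.
    nra. }
  pose proof (hinner_pos _ u); pose proof (hinner_pos _ v).
  destruct (Req_dec (hinner v v) 0) as [Zv | Zv].
  - (* the quadratic is then affine in l, so its slope <u, v> must vanish *)
    destruct (Req_dec (hinner u v) 0) as [Zuv | Zuv]; [rewrite Zuv, Zv; lra |].
    specialize (Quad (- (hinner u u + 1) / (2 * hinner u v))).
    replace (2 * (- (hinner u u + 1) / (2 * hinner u v)) * hinner u v)
      with (- (hinner u u + 1)) in Quad by (field; exact Zuv).
    rewrite Zv in Quad; lra.
  - specialize (Quad (- hinner u v / hinner v v)).
    assert (Hv : 0 < hinner v v) by lra.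
    replace (hinner u u + 2 * (- hinner u v / hinner v v) * hinner u v
             + (- hinner u v / hinner v v) ^ 2 * hinner v v)
      with ((hinner u u * hinner v v - hinner u v ^ 2) / hinner v v) in Quad by (field; lra).
    apply Rmult_le_compat_r with (r := hinner v v) in Quad; [|lra].
    unfold Rdiv in Quad; rewrite Rmult_assoc, Rinv_l in Quad; lra.
Qed.

Lemma inner_le_norm_mul u v : hinner u v <= hnorm u * hnorm v.
Proof.
  unfold hnorm; rewrite <- sqrt_mult by apply hinner_pos.
  destruct (Rle_or_lt (hinner u v) 0) as [Hle | Hlt].
  - pose proof (sqrt_pos (hinner u u * hinner v v)); lra.
  - rewrite <- (sqrt_pow2 (hinner u v)) by lra.
    apply sqrt_le_1_alt, inner_sq_le.
Qed.

Lemma hnorm_nonneg u : 0 <= hnorm u.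
Proof. apply sqrt_pos. Qed.

Lemma hnorm_triangle u v w : hnorm (hsub u w) <= hnorm (hsub u v) + hnorm (hsub v w).
Proof.
  set (p := hsub u v); set (q := hsub v w).
  assert (E : hinner (hsub u w) (hsub u w) = hinner p p + 2 * hinner p q + hinner q q).
  { unfold p, q; rewrite !inner_sub_l, !inner_sub_r,
      (hinner_sym H v u), (hinner_sym H w u), (hinner_sym H w v); ring. }
  assert (Sq : forall z, hinner z z = hnorm z ^ 2).
  { intro z; unfold hnorm; rewrite pow2_sqrt; [reflexivity | apply hinner_pos]. }
  pose proof (inner_le_norm_mul p q); pose proof (hnorm_nonneg p); pose proof (hnorm_nonneg q).
  unfold hnorm at 1; rewrite E, !Sq.
  rewrite <- (sqrt_pow2 (hnorm p + hnorm q)) by lra.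
  apply sqrt_le_1_alt; nra.
Qed.

Lemma hnorm_sym u v : hnorm (hsub u v) = hnorm (hsub v u).
Proof.
  unfold hnorm; f_equal; rewrite !inner_sub_l, !inner_sub_r, (hinner_sym H u v); ring.
Qed.

Lemma hnorm_sub_diag u : hnorm (hsub u u) = 0.
Proof.
  unfold hnorm; rewrite inner_sub_l, !inner_sub_r, <- sqrt_0; f_equal; ring.
Qed.

Lemma hnorm_sub_eq0 u v : hnorm (hsub u v) = 0 -> u = v.
Proof.
  intro E; apply sqrt_eq_0 in E; [| apply hinner_pos].
  apply hinner_def in E; unfold hsub in E.
  rewrite <- (hadd_zero H u), <- (hadd_opp H v), (hadd_comm H v), hadd_assoc, E,
    hadd_comm, hadd_zero.
  reflexivity.
Qed.

Lemma hconv_dist_le (s : nat -> H) l y c K :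
  hconv s l -> (forall n, (K <= n)%nat -> hnorm (hsub (s n) y) <= c) ->
  hnorm (hsub l y) <= c.
Proof.
  intros Hs Hbound; apply Rle_plus_epsilon; intros eps Heps.
  destruct (Hs eps Heps) as [N HN].
  pose proof (hnorm_triangle l (s (max N K)) y) as Tri.
  rewrite (hnorm_sym l (s _)) in Tri.
  specialize (HN (max N K) (Nat.le_max_l _ _)).
  specialize (Hbound (max N K) (Nat.le_max_r _ _)).
  lra.
Qed.

Lemma hnorm_path_le (s : nat -> H) k n :
  hnorm (hsub (s (k + n)%nat) (s k)) <= psum (fun j => hnorm (hsub (s (S j)) (s j))) k n.
Proof.
  induction n as [| n IH]; simpl.
  - rewrite Nat.add_0_r, hnorm_sub_diag; lra.
  - rewrite Nat.add_succ_r.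
    pose proof (hnorm_triangle (s (S (k + n))) (s (k + n)%nat) (s k)); lra.
Qed.

End HilbertGeometry.

Lemma below_mono eta s t : below eta t -> s <= t -> below eta s.
Proof. destruct eta; simpl; lra. Qed.

Lemma below_pos_exists eta delta : eta_pos eta -> 0 < delta ->
  exists t, 0 < t < delta /\ below eta t.
Proof.
  intros Heta Hdelta; destruct eta as [e |]; simpl in *.
  - exists (Rmin delta e / 2).
    pose proof (Rmin_l delta e); pose proof (Rmin_r delta e).
    pose proof (Rmin_glb_lt delta e 0 Hdelta Heta); lra.
  - exists (delta / 2); lra.
Qed.

Lemma cv0_eventually_below eta u : eta_pos eta -> Un_cv u 0 ->
  exists N, forall n, (N <= n)%nat -> below eta (u n).
Proof.
  intros Heta Hu; destruct eta as [e |]; simpl in *.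
  - destruct (Hu e Heta) as [N HN]; exists N; intros n Hn.
    specialize (HN n Hn); unfold Rdist in HN; rewrite Rminus_0_r in HN.
    pose proof (Rle_abs (u n)); lra.
  - exists 0%nat; auto.
Qed.

Lemma decreasing_cv0_nonneg u : Un_decreasing u -> Un_cv u 0 -> forall k, 0 <= u k.
Proof.
  intros Hdec Hu k; destruct (Rle_or_lt 0 (u k)) as [| Hneg]; [assumption |].
  destruct (Hu (- u k)) as [N HN]; [lra |].
  specialize (HN (max N k) (Nat.le_max_l _ _)); unfold Rdist in HN.
  pose proof (decreasing_prop u k (max N k) Hdec (Nat.le_max_r _ _)).
  rewrite Rminus_0_r in HN; pose proof (Rle_abs (- u (max N k))) as A.
  rewrite Rabs_Ropp in A; lra.
Qed.

Lemma psum_shift (u : nat -> R) k n : psum u (S k) n = psum (fun j => u (S j)) k n.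
Proof. induction n as [| n IH]; simpl; [reflexivity | now rewrite IH]. Qed.

Lemma psum_split (u : nat -> R) k n p : psum u k (n + p) = psum u k n + psum u (k + n) p.
Proof.
  induction p as [| p IH]; simpl.
  - rewrite Nat.add_0_r; ring.
  - rewrite Nat.add_succ_r; simpl; rewrite IH, Nat.add_assoc; ring.
Qed.

Lemma psum_nonneg (u : nat -> R) k n : (forall j, 0 <= u j) -> 0 <= psum u k n.
Proof. intro Hu; induction n as [| n IH]; simpl; [lra | specialize (Hu (k + n)%nat); lra]. Qed.

Lemma psum_mono (u : nat -> R) k n p : (forall j, 0 <= u j) -> psum u k n <= psum u k (n + p).
Proof. intro Hu; rewrite psum_split; pose proof (psum_nonneg u (k + n) p Hu); lra. Qed.

Lemma psum_unbounded_from (b : nat -> R) k0 :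
  (forall k, 0 <= b (S k)) -> ~ (exists S, forall n, psum b 1 n <= S) ->
  forall M, exists n, M < psum (fun j => b (S j)) k0 n.
Proof.
  intros Hb Hunb M; apply NNPP; intro Hbdd; apply Hunb.
  exists (psum (fun j => b (S j)) 0 k0 + M); intro n.
  assert (Hk0 : psum (fun j => b (S j)) k0 n <= M).
  { apply Rnot_lt_le; intro Hlt; apply Hbdd; eauto. }
  pose proof (psum_mono (fun j => b (S j)) 0 n k0 Hb) as Hmono.
  rewrite psum_shift.
  rewrite Nat.add_comm, psum_split in Hmono; simpl in Hmono; lra.
Qed.

Lemma IVT_blowup_at0 (g : R -> R) tau y : 0 < tau ->
  (forall t, 0 < t <= tau -> continuity_pt g t) ->
  (forall M, exists delta, 0 < delta /\ forall t, 0 < t -> t < delta -> t <= tau -> M < g t) ->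
  g tau <= y -> exists t, 0 < t <= tau /\ g t = y.
Proof.
  intros Htau Hcont Hblow Hy.
  destruct (Req_dec (g tau) y) as [E | Hne]; [exists tau; split; [lra | exact E] |].
  destruct (Hblow y) as [delta [Hdelta Hgt]].
  set (t1 := Rmin delta tau / 2).
  assert (Ht1 : 0 < t1 < delta /\ t1 < tau).
  { pose proof (Rmin_l delta tau); pose proof (Rmin_r delta tau).
    pose proof (Rmin_glb_lt delta tau 0 Hdelta Htau); unfold t1; lra. }
  destruct (IVT_interv (fun s => y - g s) t1 tau) as [t [Ht Et]].
  - intros s Hs; apply continuity_pt_minus;
      [apply continuity_pt_const; now intros ? ? | apply Hcont; lra].
  - lra.
  - specialize (Hgt t1 ltac:(lra) ltac:(lra) ltac:(lra)); lra.
  - lra.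
  - exists t; split; lra.
Qed.

Lemma derivable_pt_lim_ge_quotient (g : R -> R) l c :
  derivable_pt_lim g 0 l -> (forall h, 0 < h <= 1 -> c <= (g h - g 0) / h) -> c <= l.
Proof.
  intros Hd Hq; apply Rnot_lt_le; intro Hlt.
  destruct (Hd (c - l)) as [delta Hdelta]; [lra |].
  pose proof (cond_pos delta); pose proof (Rmin_l 1 (delta / 2)); pose proof (Rmin_r 1 (delta / 2)).
  set (h := Rmin 1 (delta / 2)) in *.
  assert (Hh : 0 < h) by (apply Rmin_glb_lt; lra).
  specialize (Hq h ltac:(lra)).
  specialize (Hdelta h (Rgt_not_eq _ _ Hh) ltac:(rewrite Rabs_pos_eq; lra)).
  rewrite Rplus_0_l, Rabs_pos_eq in Hdelta; lra.
Qed.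

(** * Desingularizing functions *)

Section Desingularizing.
Variables (eta : option R) (phi dphi : R -> R).
Hypothesis Dphi : desingularizing eta phi dphi.

Lemma phi_nonneg t : 0 <= t -> below eta t -> 0 <= phi t.
Proof. apply Dphi. Qed.

Lemma dphi_pos t : 0 < t -> below eta t -> 0 < dphi t.
Proof. apply Dphi. Qed.

(* By concavity the difference quotients of phi from s towards t dominate the chord slope;
   letting the step go to 0 bounds that slope by phi'(s). *)
Lemma phi_tangent s t : 0 < s -> below eta s -> 0 <= t -> below eta t ->
  phi t - phi s <= dphi s * (t - s).
Proof.
  destruct Dphi as [_ [_ [_ [_ [Hconc [Hder _]]]]]]; intros Hs Hbs Ht Hbt.
  set (g := fun h => phi (s + h * (t - s))).
  assert (Hg0 : g 0 = phi s) by (unfold g; f_equal; ring).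
  apply (derivable_pt_lim_ge_quotient g).
  - apply (derivable_pt_lim_comp (fun h => s + h * (t - s)) phi).
    + intros eps Heps; exists (mkposreal 1 Rlt_0_1); intros h Hh _.
      replace ((s + (0 + h) * (t - s) - (s + 0 * (t - s))) / h - (t - s)) with 0
        by (field; exact Hh).
      now rewrite Rabs_R0.
    + replace (s + 0 * (t - s)) with s by ring; now apply Hder.
  - intros h Hh; rewrite Hg0.
    pose proof (Hconc t s h Ht Hbt (Rlt_le _ _ Hs) Hbs ltac:(lra)) as Hc.
    replace (h * t + (1 - h) * s) with (s + h * (t - s)) in Hc by ring.
    apply Rmult_le_reg_r with h; [lra |].
    unfold Rdiv; rewrite Rmult_assoc, Rinv_l by lra; unfold g; lra.
Qed.

Lemma dphi_antitone s t : 0 < s -> s <= t -> below eta t -> dphi t <= dphi s.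
Proof.
  intros Hs Hst Hbt; pose proof (below_mono _ _ _ Hbt Hst) as Hbs.
  pose proof (phi_tangent s t Hs Hbs ltac:(lra) Hbt).
  pose proof (phi_tangent t s ltac:(lra) Hbt ltac:(lra) Hbs).
  destruct (Req_dec s t); [subst; lra | nra].
Qed.

Lemma phi_mono s t : 0 <= s -> s <= t -> 0 < t -> below eta t -> phi s <= phi t.
Proof.
  intros Hs Hst Ht Hbt.
  pose proof (phi_tangent t s Ht Hbt Hs (below_mono _ _ _ Hbt Hst)).
  pose proof (dphi_pos t Ht Hbt); nra.
Qed.

Variable Phi : R -> R.
Hypothesis HPhi : forall t, 0 < t -> below eta t -> derivable_pt_lim Phi t (- (dphi t) ^ 2).

Lemma Phi_decrease_lb y z : 0 < y -> y <= z -> below eta z ->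
  dphi z ^ 2 * (z - y) <= Phi y - Phi z.
Proof.
  intros Hy Hyz Hbz; destruct (Req_dec y z) as [<- | Hne]; [lra |].
  destruct (MVT_cor2 Phi (fun t => - (dphi t) ^ 2) y z) as [c [Ec Hc]]; [lra | |].
  { intros c Hc; apply HPhi; [lra | apply (below_mono _ _ _ Hbz); lra]. }
  pose proof (dphi_antitone c z ltac:(lra) ltac:(lra) Hbz).
  pose proof (dphi_pos z ltac:(lra) Hbz).
  assert (dphi z ^ 2 <= dphi c ^ 2) by nra.
  nra.
Qed.

Lemma Phi_strict_decr y z : 0 < y -> y < z -> below eta z -> Phi z < Phi y.
Proof.
  intros Hy Hyz Hbz.
  pose proof (Phi_decrease_lb y z Hy ltac:(lra) Hbz).
  pose proof (dphi_pos z ltac:(lra) Hbz).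
  assert (0 < dphi z ^ 2 * (z - y)) by (apply Rmult_lt_0_compat; nra).
  lra.
Qed.

Lemma Phi_le_inv s t : 0 < s -> below eta s -> 0 < t -> Phi t <= Phi s -> s <= t.
Proof.
  intros Hs Hbs Ht HP; apply Rnot_lt_le; intro Hts.
  pose proof (Phi_strict_decr t s Ht Hts Hbs); lra.
Qed.

End Desingularizing.

(** * The descent inequalities *)

Section DescentInequalities.
Variables (eta : option R) (phi dphi Phi : R -> R) (r d a b : nat -> R) (m : R) (N : nat).
Hypothesis Dphi : desingularizing eta phi dphi.
Hypothesis HPhi : forall t, 0 < t -> below eta t -> derivable_pt_lim Phi t (- (dphi t) ^ 2).
Hypothesis a_pos : forall k, 0 < a k.
Hypothesis b_pos : forall k, 0 < b (S k).
Hypothesis m_pos : 0 < m.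
Hypothesis m_le : forall k, m <= a k * b (S k).
Hypothesis d_nonneg : forall k, 0 <= d k.
Hypothesis r_nonneg : forall k, 0 <= r k.
Hypothesis r_descent : forall k, r (S k) + a k * d k ^ 2 <= r k.
Hypothesis r_below : forall k, (N <= k)%nat -> below eta (r k).
Hypothesis slope_le : forall k, (N <= k)%nat -> 0 < r k -> b (S k) <= dphi (r k) * d k.

Lemma r_decreasing : Un_decreasing r.
Proof. intro k; specialize (r_descent k); specialize (a_pos k); nra. Qed.

Lemma r_zero_stationary K : r K = 0 -> forall k, (K <= k)%nat -> r k = 0 /\ d k = 0.
Proof.
  intros HK k Hk.
  pose proof (decreasing_prop r K k r_decreasing Hk).
  pose proof (decreasing_prop r K (S k) r_decreasing ltac:(lia)).
  pose proof (r_nonneg k); pose proof (r_nonneg (S k)).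
  specialize (r_descent k); specialize (a_pos k); specialize (d_nonneg k).
  assert (a k * d k ^ 2 <= 0) by lra.
  assert (d k * d k <= 0) by nra.
  split; [lra | nra].
Qed.

Lemma phi_r_step k : (N <= k)%nat -> m * d k <= phi (r k) - phi (r (S k)).
Proof.
  intros Hk; pose proof (r_below k Hk) as Hb.
  destruct (Req_dec (r k) 0) as [Z | Z].
  - destruct (r_zero_stationary k Z k (le_n k)) as [_ ->].
    destruct (r_zero_stationary k Z (S k) (le_S _ _ (le_n k))) as [-> _].
    rewrite Z; lra.
  - assert (Hr : 0 < r k) by (pose proof (r_nonneg k); lra).
    pose proof (phi_tangent eta phi dphi Dphi (r k) (r (S k)) Hr Hb (r_nonneg (S k))
                  (below_mono _ _ _ Hb (r_decreasing k))).
    pose proof (slope_le k Hk Hr); pose proof (dphi_pos eta phi dphi Dphi _ Hr Hb).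
    specialize (r_descent k); specialize (m_le k); specialize (a_pos k); specialize (d_nonneg k).
    assert (dphi (r k) * (a k * d k ^ 2) <= dphi (r k) * (r k - r (S k))) by nra.
    assert (a k * d k * b (S k) <= a k * d k * (dphi (r k) * d k))
      by (apply Rmult_le_compat_l; [apply Rmult_le_pos |]; lra).
    assert (m * d k <= a k * b (S k) * d k) by (apply Rmult_le_compat_r; lra).
    lra.
Qed.

Lemma Phi_r_step k : (N <= k)%nat -> 0 < r (S k) -> m * b (S k) <= Phi (r (S k)) - Phi (r k).
Proof.
  intros Hk Hr1; pose proof (r_below k Hk) as Hb.
  pose proof (r_decreasing k) as Hdec; assert (Hr : 0 < r k) by lra.
  pose proof (Phi_decrease_lb eta phi dphi Dphi Phi HPhi (r (S k)) (r k) Hr1 Hdec Hb).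
  pose proof (slope_le k Hk Hr); pose proof (b_pos k).
  specialize (r_descent k); specialize (m_le k); specialize (a_pos k).
  assert (dphi (r k) ^ 2 * (a k * d k ^ 2) <= dphi (r k) ^ 2 * (r k - r (S k))) by nra.
  assert (b (S k) ^ 2 <= (dphi (r k) * d k) ^ 2) by (apply pow_incr; lra).
  nra.
Qed.

Lemma Phi_r_psum k0 n : (N <= k0)%nat -> 0 < r (k0 + n)%nat ->
  Phi (r k0) + m * psum (fun j => b (S j)) k0 n <= Phi (r (k0 + n)%nat).
Proof.
  intro Hk0; induction n as [| n IH]; intro Hpos; simpl.
  - rewrite Nat.add_0_r; lra.
  - rewrite Nat.add_succ_r in Hpos |- *.
    pose proof (r_decreasing (k0 + n)%nat).
    specialize (IH ltac:(lra)); pose proof (Phi_r_step (k0 + n) ltac:(lia) Hpos); lra.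
Qed.

Lemma phi_r_psum k n : (N <= k)%nat -> m * psum d k n <= phi (r k) - phi (r (k + n)%nat).
Proof.
  intro Hk; induction n as [| n IH]; simpl.
  - rewrite Nat.add_0_r; lra.
  - rewrite Nat.add_succ_r; pose proof (phi_r_step (k + n) ltac:(lia)); lra.
Qed.

Lemma r_le_of_Phi_psum k0 k tau t : (N <= k0 <= k)%nat -> 0 < tau -> below eta tau ->
  r k0 < tau -> 0 <= Phi tau -> 0 < t ->
  Phi t = m * psum (fun j => b (S j)) k0 (k - k0) -> r k <= t.
Proof.
  intros Hk Htau Hbtau Hk0 HPtau Ht HPt.
  destruct (Req_dec (r k) 0) as [Z | Z]; [lra |].
  assert (Hrk : 0 < r k) by (pose proof (r_nonneg k); lra).
  pose proof (decreasing_prop r k0 k r_decreasing ltac:(lia)).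
  pose proof (Phi_r_psum k0 (k - k0) ltac:(lia)) as Hsum.
  replace (k0 + (k - k0))%nat with k in Hsum by lia.
  pose proof (Phi_strict_decr eta phi dphi Dphi Phi HPhi (r k0) tau ltac:(lra) Hk0 Hbtau).
  apply (Phi_le_inv eta phi dphi Dphi Phi HPhi); [lra | apply r_below; lia | exact Ht |].
  specialize (Hsum Hrk); lra.
Qed.

Hypothesis r_cv0 : Un_cv r 0.
Hypothesis b_unbounded : ~ (exists S, forall n, psum b 1 n <= S).

Lemma r_vanishes :
  (exists B delta, 0 < delta /\ forall t, 0 < t -> t < delta -> below eta t -> Phi t <= B) ->
  exists K, r K = 0.
Proof.
  intros [B [delta [Hdelta HB]]]; apply NNPP; intro Hnz.
  assert (Hpos : forall k, 0 < r k).
  { intro k; destruct (Req_dec (r k) 0); [exfalso; eauto | pose proof (r_nonneg k); lra]. }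
  destruct (r_cv0 delta Hdelta) as [N' HN'].
  set (k0 := max N N').
  assert (HNk0 : (N <= k0 /\ N' <= k0)%nat) by (split; [apply Nat.le_max_l | apply Nat.le_max_r]).
  destruct (psum_unbounded_from b k0 (fun k => Rlt_le _ _ (b_pos k)) b_unbounded
              ((B - Phi (r k0)) / m)) as [n Hn].
  pose proof (Phi_r_psum k0 n (proj1 HNk0) (Hpos (k0 + n)%nat)).
  specialize (HN' (k0 + n)%nat ltac:(lia)); unfold Rdist in HN'; rewrite Rminus_0_r in HN'.
  pose proof (Rle_abs (r (k0 + n)%nat)).
  specialize (HB (r (k0 + n)%nat) (Hpos (k0 + n)%nat) ltac:(lra)
                 (r_below (k0 + n)%nat ltac:(lia))).
  apply Rmult_lt_compat_l with (r := m) in Hn; [| exact m_pos].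
  replace (m * ((B - Phi (r k0)) / m)) with (B - Phi (r k0)) in Hn by (field; lra).
  lra.
Qed.

Lemma r_le_Phi_inverse :
  (forall M, exists delta, 0 < delta /\
     forall t, 0 < t -> t < delta -> below eta t -> M < Phi t) ->
  exists k0 K, (N <= k0 <= K)%nat /\ forall k, (K <= k)%nat ->
    exists t, 0 < t /\ below eta t /\
      Phi t = m * psum (fun j => b (S j)) k0 (k - k0) /\ r k <= t.
Proof.
  intros Hblow.
  destruct (Hblow 0) as [delta0 [Hdelta0 HPhi0]].
  destruct (below_pos_exists eta delta0 (proj1 Dphi) Hdelta0) as [tau [Htau Hbtau]].
  pose proof (HPhi0 tau ltac:(lra) ltac:(lra) Hbtau) as HPtau.
  destruct (r_cv0 tau ltac:(lra)) as [N' HN'].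
  set (k0 := max N N').
  assert (HNk0 : (N <= k0 /\ N' <= k0)%nat) by (split; [apply Nat.le_max_l | apply Nat.le_max_r]).
  assert (Hk0 : r k0 < tau).
  { specialize (HN' k0 (proj2 HNk0)); unfold Rdist in HN'; rewrite Rminus_0_r in HN'.
    pose proof (Rle_abs (r k0)); lra. }
  destruct (psum_unbounded_from b k0 (fun k => Rlt_le _ _ (b_pos k)) b_unbounded
              (Phi tau / m)) as [n Hn].
  exists k0, (k0 + n)%nat; split; [lia |]; intros k Hk.
  set (Sk := m * psum (fun j => b (S j)) k0 (k - k0)).
  assert (HSk : Phi tau <= Sk).
  { pose proof (psum_mono (fun j => b (S j)) k0 n (k - k0 - n) (fun j => Rlt_le _ _ (b_pos j)))
      as Hmono.
    replace (n + (k - k0 - n))%nat with (k - k0)%nat in Hmono by lia.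
    apply Rmult_lt_compat_l with (r := m) in Hn; [| exact m_pos].
    replace (m * (Phi tau / m)) with (Phi tau) in Hn by (field; lra).
    unfold Sk; nra. }
  destruct (IVT_blowup_at0 Phi tau Sk ltac:(lra)) as [t [Ht HPt]]; [| | exact HSk |].
  - intros t Ht; apply derivable_continuous_pt; exists (- (dphi t) ^ 2).
    apply HPhi; [lra | apply (below_mono _ _ _ Hbtau); lra].
  - intros M; destruct (Hblow M) as [delta [Hdelta HM]]; exists delta; split; [exact Hdelta |].
    intros t Ht Htd Httau; apply HM; [exact Ht | exact Htd |].
    exact (below_mono _ _ _ Hbtau Httau).
  - exists t; repeat split; [lra | apply (below_mono _ _ _ Hbtau); lra | exact HPt |].
    apply (r_le_of_Phi_psum k0 k tau t);
      [lia | lra | exact Hbtau | exact Hk0 | lra | lra | exact HPt].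
Qed.

End DescentInequalities.

(* [None] stands for +oo and is sent to the junk value 0; [fin_val] is only read where [f]
   is finite. *)
Definition fin_val (v : option R) : R := match v with Some c => c | None => 0 end.

Lemma lazy_slope_le_finite {H : Hilbert} (f : efun H) z c :
  lazy_slope_le f z c -> f z = Some (fin_val (f z)).
Proof.
  intro Hle; destruct (Hle 1 Rlt_0_1) as [p [[u [q [[_ [fz [E _]]] _]]] _]].
  now rewrite E.
Qed.

Lemma lazy_slope_le_ge {H : Hilbert} (f : efun H) z c1 c2 :
  lazy_slope_le f z c1 -> lazy_slope_ge f z c2 -> c2 <= c1.
Proof.
  intros Hle Hge; apply Rle_plus_epsilon; intros eps Heps.
  destruct (Hle eps Heps) as [p [Hp Hnp]]; specialize (Hge p Hp); lra.
Qed.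

Section KLDescentSequence.
Variables (H : Hilbert) (f : efun H) (x : nat -> H) (a b : nat -> R) (xs : H)
  (eta : option R) (phi dphi Phi : R -> R) (m : R).
Hypothesis H1 : forall k, 0 < a k /\
  ele (option_map (fun v => v + a k * (hnorm (hsub (x (S k)) (x k))) ^ 2) (f (x (S k))))
      (f (x k)).
Hypothesis H2 : forall k, 0 < b (S k) /\
  lazy_slope_le f (x k) (hnorm (hsub (x (S k)) (x k)) / b (S k)).
Hypothesis H3ii : ~ (exists S, forall n, psum b 1 n <= S).
Hypothesis Hm_lb : forall k, m <= a k * b (S k).
Hypothesis Hm_pos : 0 < m.
Hypothesis Hfconv : fconv f x xs.
Hypothesis HKL : KL_at f xs eta phi dphi.
Hypothesis HPhi : forall t, 0 < t -> below eta t -> derivable_pt_lim Phi t (- (dphi t) ^ 2).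

Let r k := fin_val (f (x k)) - fin_val (f xs).
Let d k := hnorm (hsub (x (S k)) (x k)).

Lemma a_pos k : 0 < a k.
Proof. exact (proj1 (H1 k)). Qed.

Lemma b_pos k : 0 < b (S k).
Proof. exact (proj1 (H2 k)). Qed.

Lemma d_nonneg k : 0 <= d k.
Proof. apply hnorm_nonneg. Qed.

Lemma Dphi : desingularizing eta phi dphi.
Proof. exact (proj1 HKL). Qed.

Lemma f_x_finite k : f (x k) = Some (fin_val (f (x k))).
Proof. exact (lazy_slope_le_finite f (x k) _ (proj2 (H2 k))). Qed.

Lemma f_xs_finite : f xs = Some (fin_val (f xs)).
Proof. destruct HKL as [_ [fs [E _]]]; now rewrite E. Qed.

Lemma r_descent k : r (S k) + a k * d k ^ 2 <= r k.
Proof.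
  destruct (H1 k) as [_ Hele]; rewrite (f_x_finite k), (f_x_finite (S k)) in Hele.
  unfold r, d; simpl in Hele; lra.
Qed.

Lemma r_cv0 : Un_cv r 0.
Proof.
  destruct Hfconv as [_ [fs [E Hcv]]]; intros eps Heps.
  destruct (Hcv eps Heps) as [N HN]; exists N; intros n Hn.
  destruct (HN n Hn) as [v [Ev Hv]].
  unfold Rdist, r; rewrite Ev, E, Rminus_0_r; exact Hv.
Qed.

Lemma r_nonneg k : 0 <= r k.
Proof.
  apply decreasing_cv0_nonneg; [| exact r_cv0].
  intro j; pose proof (r_descent j); pose proof (a_pos j); unfold d in *; nra.
Qed.

Lemma KL_zone : exists N,
  (forall k, (N <= k)%nat -> below eta (r k)) /\
  (forall k, (N <= k)%nat -> 0 < r k -> b (S k) <= dphi (r k) * d k).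
Proof.
  destruct HKL as [_ [fs [Efs [delta [Hdelta HKLx]]]]].
  destruct (proj1 Hfconv delta Hdelta) as [N1 HN1].
  destruct (cv0_eventually_below eta r (proj1 Dphi) r_cv0) as [N2 HN2].
  exists (max N1 N2); split; [intros k Hk; apply HN2; lia |].
  intros k Hk Hr.
  assert (Hbelow : below eta (r k)) by (apply HN2; lia).
  pose proof (dphi_pos eta phi dphi Dphi _ Hr Hbelow) as Hdp.
  destruct (H2 k) as [Hb Hle].
  assert (Hfs : fs = fin_val (f xs)) by now rewrite Efs.
  subst fs.
  assert (Hslope : / dphi (r k) <= d k / b (S k)).
  { apply (lazy_slope_le_ge f (x k)); [exact Hle |].
    apply (HKLx (x k)); [apply HN1; lia | apply f_x_finite | unfold r in Hr; lra | exact Hbelow]. }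
  apply Rmult_le_compat_l with (r := dphi (r k) * b (S k)) in Hslope; [| nra].
  replace (dphi (r k) * b (S k) * / dphi (r k)) with (b (S k)) in Hslope by (field; lra).
  replace (dphi (r k) * b (S k) * (d k / b (S k))) with (dphi (r k) * d k) in Hslope
    by (field; lra).
  exact Hslope.
Qed.

Lemma dist_to_limit_le N :
  (forall k, (N <= k)%nat -> below eta (r k)) ->
  (forall k, (N <= k)%nat -> 0 < r k -> b (S k) <= dphi (r k) * d k) ->
  forall k, (N <= k)%nat -> hnorm (hsub xs (x k)) <= phi (r k) / m.
Proof.
  intros Hbelow Hslope k Hk.
  apply (hconv_dist_le H x xs (x k) _ k (proj1 Hfconv)); intros n Hn.
  replace n with (k + (n - k))%nat by lia.
  eapply Rle_trans; [apply hnorm_path_le |]; change (psum _ k (n - k)) with (psum d k (n - k)).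
  assert (Hsum : m * psum d k (n - k) <= phi (r k) - phi (r (k + (n - k))%nat)).
  { eapply (phi_r_psum eta phi dphi r d a b m N);
      eauto using Dphi, a_pos, d_nonneg, r_nonneg, r_descent. }
  pose proof (phi_nonneg eta phi dphi Dphi _ (r_nonneg (k + (n - k)))
                (Hbelow (k + (n - k))%nat ltac:(lia))).
  apply Rmult_le_reg_l with m; [exact Hm_pos |].
  replace (m * (phi (r k) / m)) with (phi (r k)) by (field; lra); lra.
Qed.

Lemma finite_termination :
  (exists L, forall eps, 0 < eps -> exists delta, 0 < delta /\
     forall t, 0 < t -> t < delta -> below eta t -> Rabs (Phi t - L) < eps) ->
  exists K, f (x K) = f xs /\ forall k, (K <= k)%nat -> x k = xs.
Proof.
  intros [L HL]; destruct KL_zone as [N [Hbelow Hslope]].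
  destruct (r_vanishes eta phi dphi Phi r d a b m N) as [K HK];
    eauto using Dphi, a_pos, b_pos, r_nonneg, r_descent, r_cv0.
  { destruct (HL 1 Rlt_0_1) as [delta [Hdelta Hclose]].
    exists (L + 1), delta; split; [exact Hdelta |].
    intros t Ht Htd Hbt; specialize (Hclose t Ht Htd Hbt); pose proof (Rle_abs (Phi t - L)); lra. }
  assert (Hstat : forall n, x (K + n)%nat = x K).
  { induction n as [| n IH]; [now rewrite Nat.add_0_r |].
    rewrite Nat.add_succ_r, <- IH; apply hnorm_sub_eq0.
    exact (proj2 (r_zero_stationary r d a a_pos d_nonneg r_nonneg r_descent K HK (K + n)
                    (Nat.le_add_r K n))). }
  assert (HxK : xs = x K).
  { apply hnorm_sub_eq0, Rle_antisym; [| apply hnorm_nonneg].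
    apply (hconv_dist_le H x xs (x K) 0 K (proj1 Hfconv)); intros n Hn.
    replace n with (K + (n - K))%nat by lia; rewrite Hstat, hnorm_sub_diag; lra. }
  exists K; split.
  - rewrite f_x_finite, f_xs_finite; f_equal; unfold r in HK; lra.
  - intros k Hk; replace k with (K + (k - K))%nat by lia; now rewrite Hstat.
Qed.

Lemma convergence_rate :
  (forall M, exists delta, 0 < delta /\
     forall t, 0 < t -> t < delta -> below eta t -> M < Phi t) ->
  exists k0 : nat, exists C1 C2 : R, exists K : nat, (k0 <= K)%nat /\
    forall k, (K <= k)%nat ->
      exists t, 0 < t /\ below eta t /\
        Phi t = m * psum (fun n => b (S n)) k0 (k - k0) /\
        (exists v fs, f (x k) = Some v /\ f xs = Some fs /\ Rabs (v - fs) <= C1 * t) /\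
        hnorm (hsub xs (x k)) <= C2 * phi t.
Proof.
  intros Hblow; destruct KL_zone as [N [Hbelow Hslope]].
  destruct (r_le_Phi_inverse eta phi dphi Phi r d a b m N) as [k0 [K [Hk0K Hrate]]];
    eauto using Dphi, a_pos, b_pos, r_nonneg, r_descent, r_cv0.
  exists k0, 1, (/ m), K; split; [lia |]; intros k Hk.
  destruct (Hrate k Hk) as [t [Ht [Hbt [HPt Hrt]]]].
  exists t; repeat split; [exact Ht | exact Hbt | exact HPt | |].
  - exists (fin_val (f (x k))), (fin_val (f xs)); split; [apply f_x_finite |].
    split; [apply f_xs_finite |].
    rewrite Rabs_pos_eq by apply (r_nonneg k); unfold r in Hrt; lra.
  - pose proof (dist_to_limit_le N Hbelow Hslope k ltac:(lia)).
    pose proof (phi_mono eta phi dphi Dphi (r k) t (r_nonneg k) Hrt Ht Hbt).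
    apply Rle_trans with (phi (r k) / m); [assumption |].
    unfold Rdiv; rewrite Rmult_comm; apply Rmult_le_compat_l; [| assumption].
    apply Rlt_le, Rinv_0_lt_compat, Hm_pos.
Qed.

End KLDescentSequence.

Theorem mainTheorem6
  (H : Hilbert) (f : efun H) (x : nat -> H) (a b : nat -> R)
  (xs : H) (eta : option R) (phi dphi Phi : R -> R) (m : R)
  (Hproper : proper f) (Hlsc : lsc f)
  (H1 : forall k, 0 < a k /\
     ele (option_map (fun v => v + a k * (hnorm (hsub (x (S k)) (x k))) ^ 2) (f (x (S k))))
         (f (x k)))
  (H2 : forall k, 0 < b (S k) /\
     lazy_slope_le f (x k) (hnorm (hsub (x (S k)) (x k)) / b (S k)))
  (H3i : exists alow, 0 < alow /\ forall k, alow <= a k)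
  (H3ii : ~ (exists S, forall n, psum b 1 n <= S))
  (H3iii : exists M, forall k, (1 <= k)%nat -> / (a k * b k) <= M)
  (Hm_lb : forall k, m <= a k * b (S k))
  (Hm_glb : forall m', (forall k, m' <= a k * b (S k)) -> m' <= m)
  (Hm_pos : 0 < m)
  (Hfconv : fconv f x xs)
  (HKL : KL_at f xs eta phi dphi)
  (HPhi : forall t, 0 < t -> below eta t -> derivable_pt_lim Phi t (- (dphi t) ^ 2)) :
  ((exists L, forall eps, 0 < eps -> exists delta, 0 < delta /\
       forall t, 0 < t -> t < delta -> below eta t -> Rabs (Phi t - L) < eps) ->
   exists K, f (x K) = f xs /\ forall k, (K <= k)%nat -> x k = xs)
  /\
  ((forall M, exists delta, 0 < delta /\
       forall t, 0 < t -> t < delta -> below eta t -> M < Phi t) ->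
   exists k0 : nat, exists C1 C2 : R, exists K : nat, (k0 <= K)%nat /\
     forall k, (K <= k)%nat ->
       exists t, 0 < t /\ below eta t /\
         Phi t = m * psum (fun n => b (S n)) k0 (k - k0) /\
         (exists v fs, f (x k) = Some v /\ f xs = Some fs /\ Rabs (v - fs) <= C1 * t) /\
         hnorm (hsub xs (x k)) <= C2 * phi t).
Proof.
  split; [eapply finite_termination | eapply convergence_rate]; eassumption.
Qed.
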